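(* Let $\mathcal A$ be an abelian category and $\mathcal T$ a full subcategory consisting of projective objects, closed under finite direct sums and direct summands. The following are equivalent: (1) $\underline{\mathcal A}=\mathcal A/\langle\mathcal T\rangle$ is balanced; (2) if $\mu:K\to X$ is a non-split monomorphism which factors through an object of $\mathcal T$, then there is a morphism $h:X\to T'$ with $T'\in\mathcal T$ such that no morphism $\tilde h:X\to(h\mu)(K)$ coincides with $h$ on $K$; (3) if $\mu:T\to X$ is a non-split monomorphism with $T\in\mathcal T$, then there is a morphism $h:X\to T'$ with $T'\in\mathcal T$ such that no morphism $\tilde h:X\to(h\mu)(T)$ coincides with $h$ on $T$; (4) every epimorphism $f:X\to Y$ satisfying (i) $f^k:\ker(f)\to X$ factors through an object of $\mathcal T$, and (ii) for every $h:X\to T$ with $T\in\mathcal T$ the canonical epimorphism $\ker(f)\twoheadrightarrow h(\ker f)$ factors through $f^k$, is a retraction; (5) for every non-split epimorphism $f:X\to Y$ with $\ker(f)\in\mathcal T$ there is a morphism $h:X\to T'$ with $T'\in\mathcal T$ such that for every morphism $g:Y\to T'$ the subobject $\ker(f)+\ker(h-gf)$ of $X$ is strictly contained in $X$.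
   Context: $\underline{\mathcal A}=\mathcal A/\langle\mathcal T\rangle$ is the stable category (same objects, morphisms modulo those factoring through an object of $\mathcal T$). A category is balanced if every morphism that is both a monomorphism and an epimorphism is an isomorphism. For a subobject $\kappa:K\hookrightarrow X$ and a morphism $h:X\to T$, $h(K)$ denotes the image of $h\kappa$ with canonical inclusion $j:h(K)\hookrightarrow T$, and $(h\mu)(K)$ the image of $h\mu$; a morphism $\tilde h:X\to h(K)$ coincides with $h$ on $K$ if $j\tilde h\kappa=h\kappa$. $f^k$ denotes the kernel morphism of $f$. *)

From HB Require Import structures.
From mathcomp Require Import all_boot all_algebra.
Set Implicit Arguments. Unset Strict Implicit. Unset Printing Implicit Defensive.
Import GRing.Theory.
Local Open Scope ring_scope.

Record PreAdd := {
  Ob :> Type;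
  Mor : Ob -> Ob -> zmodType;
  comp : forall X Y Z : Ob, Mor Y Z -> Mor X Y -> Mor X Z;
  idm : forall X : Ob, Mor X X;
  compA : forall X Y Z W (h : Mor Z W) (g : Mor Y Z) (f : Mor X Y),
      comp h (comp g f) = comp (comp h g) f;
  comp1l : forall X Y (f : Mor X Y), comp (idm Y) f = f;
  comp1r : forall X Y (f : Mor X Y), comp f (idm X) = f;
  compDl : forall X Y Z (g1 g2 : Mor Y Z) (f : Mor X Y),
      comp (g1 + g2) f = comp g1 f + comp g2 f;
  compDr : forall X Y Z (g : Mor Y Z) (f1 f2 : Mor X Y),
      comp g (f1 + f2) = comp g f1 + comp g f2
}.
Arguments Mor {C} X Y : rename.
Arguments comp {C X Y Z} g f : rename.
Arguments idm {C} X : rename.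

Notation "g ∘ f" := (comp g f) (at level 40, left associativity).

Section Defs.
Variable C : PreAdd.

Definition mono {X Y : C} (f : Mor X Y) : Prop :=
  forall W (g1 g2 : Mor W X), f ∘ g1 = f ∘ g2 -> g1 = g2.
Definition epi {X Y : C} (f : Mor X Y) : Prop :=
  forall W (g1 g2 : Mor Y W), g1 ∘ f = g2 ∘ f -> g1 = g2.
Definition iso {X Y : C} (f : Mor X Y) : Prop :=
  exists g : Mor Y X, g ∘ f = idm X /\ f ∘ g = idm Y.
Definition split_mono {X Y : C} (f : Mor X Y) : Prop :=
  exists r : Mor Y X, r ∘ f = idm X.
Definition retraction {X Y : C} (f : Mor X Y) : Prop :=
  exists s : Mor Y X, f ∘ s = idm Y.

Definition is_zero_obj (Z : C) : Prop :=
  (forall X (f : Mor Z X), f = 0) /\ (forall X (f : Mor X Z), f = 0).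

Definition is_biprod (X Y P : C) (i1 : Mor X P) (i2 : Mor Y P)
    (p1 : Mor P X) (p2 : Mor P Y) : Prop :=
  [/\ p1 ∘ i1 = idm X, p2 ∘ i2 = idm Y, p1 ∘ i2 = 0, p2 ∘ i1 = 0
    & i1 ∘ p1 + i2 ∘ p2 = idm P].

Definition is_kernel {X Y K : C} (f : Mor X Y) (k : Mor K X) : Prop :=
  f ∘ k = 0 /\
  forall W (g : Mor W X), f ∘ g = 0 -> exists! u : Mor W K, k ∘ u = g.
Definition is_cokernel {X Y Q : C} (f : Mor X Y) (q : Mor Y Q) : Prop :=
  q ∘ f = 0 /\
  forall W (g : Mor Y W), g ∘ f = 0 -> exists! u : Mor Q W, u ∘ q = g.

Definition abelian : Prop :=
  (exists Z : C, is_zero_obj Z) /\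
  [/\ (forall X Y : C, exists P i1 i2 p1 p2, @is_biprod X Y P i1 i2 p1 p2),
      (forall (X Y : C) (f : Mor X Y), exists K (k : Mor K X), is_kernel f k),
      (forall (X Y : C) (f : Mor X Y), exists Q (q : Mor Y Q), is_cokernel f q),
      (forall (X Y : C) (f : Mor X Y), mono f ->
         exists Z (g : Mor Y Z), is_kernel g f)
    & (forall (X Y : C) (f : Mor X Y), epi f ->
         exists Z (g : Mor Z X), is_cokernel g f)].

Definition projective (P : C) : Prop :=
  forall (X Y : C) (e : Mor X Y), epi e ->
    forall g : Mor P Y, exists u : Mor P X, e ∘ u = g.

Definition image_fact {X Y I : C} (f : Mor X Y) (e : Mor X I) (j : Mor I Y)
  : Prop := [/\ mono j, epi e & f = j ∘ e].

Variable T : C -> Prop.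

Definition factors_through_T {X Y : C} (f : Mor X Y) : Prop :=
  exists (T0 : C) (a : Mor X T0) (b : Mor T0 Y), T T0 /\ f = b ∘ a.

(* Equality of morphisms in the stable category A / <T>. *)
Definition st_eq {X Y : C} (f g : Mor X Y) : Prop := factors_through_T (f - g).

Definition st_mono {X Y : C} (f : Mor X Y) : Prop :=
  forall W (g1 g2 : Mor W X), st_eq (f ∘ g1) (f ∘ g2) -> st_eq g1 g2.
Definition st_epi {X Y : C} (f : Mor X Y) : Prop :=
  forall W (g1 g2 : Mor Y W), st_eq (g1 ∘ f) (g2 ∘ f) -> st_eq g1 g2.
Definition st_iso {X Y : C} (f : Mor X Y) : Prop :=
  exists g : Mor Y X, st_eq (g ∘ f) (idm X) /\ st_eq (f ∘ g) (idm Y).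

Definition stable_balanced : Prop :=
  forall (X Y : C) (f : Mor X Y), st_mono f -> st_epi f -> st_iso f.

End Defs.

(* A map out of an object of T lifts along every epimorphism; this is the only
   use of projectivity.  With it, the cokernel π of a monomorphism μ : K → X
   factoring through T is stably mono, and π is stably epi as soon as every
   h : X → T' coincides on K with a map into the image of h ∘ μ (conversely,
   a stably epi epimorphism has this property along its kernel).  If π is a
   stable isomorphism, μ factors through the image of some h ∘ μ, so the
   image factor of h ∘ μ is an isomorphism and μ splits; this gives
   (1) → (2) → (3), and (1) → (5) → (3) is the same argument with the
   subobject ker f + ker (h - g ∘ f) in place of the coincidence condition.
   For (3) → (4), push the kernel of f out along a map K → T₁ through which
   it factors: by (3) the resulting monomorphism T₁ → X' splits, and its
   retraction yields a stable section of f.  For (4) → (1), adding to a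
   stably mono and stably epi f : X → Y a suitable map c : T₁ → Y gives an
   epimorphism [f, c] : X ⊕ T₁ → Y satisfying the hypotheses of (4); a
   section of it yields a stable inverse of f. *)
From Pilot Require Import Defs.
From mathcomp Require Import all_boot ssralg.
From Stdlib Require Import Classical.
Import GRing.Theory.
Local Open Scope ring_scope.
Set Implicit Arguments. Unset Strict Implicit.

Section Preadditive.
Variable C : PreAdd.
Local Notation compA := (@Defs.compA C).
Implicit Types X Y Z W : C.

Lemma comp0l X Y Z (f : Mor X Y) : (0 : Mor Y Z) ∘ f = 0.
Proof. by apply: (addrI ((0 : Mor Y Z) ∘ f)); rewrite -compDl !addr0. Qed.

Lemma comp0r X Y Z (g : Mor Y Z) : g ∘ (0 : Mor X Y) = 0.
Proof. by apply: (addrI (g ∘ (0 : Mor X Y))); rewrite -compDr !addr0. Qed.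

Lemma compNl X Y Z (g : Mor Y Z) (f : Mor X Y) : (- g) ∘ f = - (g ∘ f).
Proof. by apply: (addrI (g ∘ f)); rewrite -compDl !subrr comp0l. Qed.

Lemma compNr X Y Z (g : Mor Y Z) (f : Mor X Y) : g ∘ (- f) = - (g ∘ f).
Proof. by apply: (addrI (g ∘ f)); rewrite -compDr !subrr comp0r. Qed.

Lemma compBl X Y Z (g1 g2 : Mor Y Z) (f : Mor X Y) :
  (g1 - g2) ∘ f = g1 ∘ f - g2 ∘ f.
Proof. by rewrite compDl compNl. Qed.

Lemma compBr X Y Z (g : Mor Y Z) (f1 f2 : Mor X Y) :
  g ∘ (f1 - f2) = g ∘ f1 - g ∘ f2.
Proof. by rewrite compDr compNr. Qed.

Lemma mono_of_eq0 X Y (f : Mor X Y) :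
  (forall W (g : Mor W X), f ∘ g = 0 -> g = 0) -> mono f.
Proof.
move=> H W g1 g2 E; apply/eqP; rewrite -subr_eq0; apply/eqP; apply: H.
by rewrite compBr E subrr.
Qed.

Lemma epi_of_eq0 X Y (f : Mor X Y) :
  (forall W (g : Mor Y W), g ∘ f = 0 -> g = 0) -> epi f.
Proof.
move=> H W g1 g2 E; apply/eqP; rewrite -subr_eq0; apply/eqP; apply: H.
by rewrite compBl E subrr.
Qed.

Lemma mono_eq0 X Y W (f : Mor X Y) (g : Mor W X) : mono f -> f ∘ g = 0 -> g = 0.
Proof. by move=> Hf E; apply: Hf; rewrite E comp0r. Qed.

Lemma epi_eq0 X Y W (f : Mor X Y) (g : Mor Y W) : epi f -> g ∘ f = 0 -> g = 0.
Proof. by move=> Hf E; apply: Hf; rewrite E comp0l. Qed.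

Lemma epi_comp X Y Z (g : Mor Y Z) (f : Mor X Y) : epi g -> epi f -> epi (g ∘ f).
Proof. by move=> Hg Hf W u v E; apply: Hg; apply: Hf; rewrite -!compA. Qed.

Lemma iso_epi X Y (f : Mor X Y) : iso f -> epi f.
Proof.
by move=> [g [_ Hfg]] W u v E; rewrite -(comp1r u) -(comp1r v) -Hfg !compA E.
Qed.

Lemma epi_of_comp X Y Z (g : Mor Y Z) (f : Mor X Y) : epi (g ∘ f) -> epi g.
Proof. by move=> Hgf W u v E; apply: Hgf; rewrite !compA E. Qed.

Lemma kernel_mono X Y K (f : Mor X Y) (k : Mor K X) : is_kernel f k -> mono k.
Proof.
move=> [Hk Hu] W g1 g2 E.
have [u [_ Hun]] : exists! u, k ∘ u = k ∘ g1 by apply: Hu; rewrite compA Hk comp0l.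
by rewrite -(Hun g1 erefl) (Hun g2 (esym E)).
Qed.

Lemma cokernel_epi X Y Q (f : Mor X Y) (q : Mor Y Q) : is_cokernel f q -> epi q.
Proof.
move=> [Hq Hu] W g1 g2 E.
have [u [_ Hun]] : exists! u, u ∘ q = g1 ∘ q by apply: Hu; rewrite -compA Hq comp0r.
by rewrite -(Hun g1 erefl) (Hun g2 (esym E)).
Qed.

Lemma kernel_factor X Y K W (f : Mor X Y) (k : Mor K X) (g : Mor W X) :
  is_kernel f k -> f ∘ g = 0 -> exists u, k ∘ u = g.
Proof. by move=> [_ H] /H [u [Hu _]]; exists u. Qed.

Lemma cokernel_factor X Y Q W (f : Mor X Y) (q : Mor Y Q) (g : Mor Y W) :
  is_cokernel f q -> g ∘ f = 0 -> exists u, u ∘ q = g.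
Proof. by move=> [_ H] /H [u [Hu _]]; exists u. Qed.

Lemma cokernel_of_epi X Y K (p : Mor X Y) (m : Mor K X) : epi p -> p ∘ m = 0 ->
  (forall W (w : Mor X W), w ∘ m = 0 -> exists u, u ∘ p = w) -> is_cokernel m p.
Proof.
move=> Hp Hpm Hfac; split=> // W w /Hfac [u Hu]; exists u; split=> // v Hv.
by apply: Hp; rewrite Hu Hv.
Qed.

Lemma kernel_comp_mono X Y Z K (j : Mor Y Z) (f : Mor X Y) (k : Mor K X) :
  mono j -> is_kernel (j ∘ f) k -> is_kernel f k.
Proof.
move=> Hj [Hk Hu]; split=> [|W g Hg]; first by apply: (mono_eq0 Hj); rewrite compA.
by apply: Hu; rewrite -compA Hg comp0r.
Qed.

Section Copair.
Variables (A B P X : C) (i1 : Mor A P) (i2 : Mor B P) (p1 : Mor P A) (p2 : Mor P B).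
Hypothesis Hb : is_biprod i1 i2 p1 p2.

Lemma copair_i1 (a : Mor A X) (b : Mor B X) : (a ∘ p1 + b ∘ p2) ∘ i1 = a.
Proof.
by case: Hb => H11 _ _ H21 _; rewrite compDl -!compA H11 H21 comp1r comp0r addr0.
Qed.

Lemma copair_i2 (a : Mor A X) (b : Mor B X) : (a ∘ p1 + b ∘ p2) ∘ i2 = b.
Proof.
by case: Hb => _ H22 H12 _ _; rewrite compDl -!compA H12 H22 comp1r comp0r add0r.
Qed.

Lemma comp_copair_eq0 W (a : Mor A X) (b : Mor B X) (w : Mor X W) :
  w ∘ (a ∘ p1 + b ∘ p2) = 0 <-> w ∘ a = 0 /\ w ∘ b = 0.
Proof.
split=> [E | [Ea Eb]].
  by split; [rewrite -(copair_i1 a b) | rewrite -(copair_i2 a b)];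
    rewrite compA E comp0l.
by rewrite compDr !compA Ea Eb !comp0l addr0.
Qed.

Lemma copair_epi (a : Mor A X) (b : Mor B X) :
  (forall W (w : Mor X W), w ∘ a = 0 -> w ∘ b = 0 -> w = 0) ->
  epi (a ∘ p1 + b ∘ p2).
Proof. by move=> H; apply: epi_of_eq0 => W w /comp_copair_eq0 [/H]; apply. Qed.

Lemma copair_epi_eq0 W (a : Mor A X) (b : Mor B X) (w : Mor X W) :
  epi (a ∘ p1 + b ∘ p2) -> w ∘ a = 0 -> w ∘ b = 0 -> w = 0.
Proof. by move=> He Ea Eb; apply: (epi_eq0 He); apply/comp_copair_eq0. Qed.

Lemma biprod_decomp W (g : Mor W P) : g = i1 ∘ (p1 ∘ g) + i2 ∘ (p2 ∘ g).
Proof. by case: Hb => _ _ _ _ Hid; rewrite !compA -compDl Hid comp1l. Qed.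

End Copair.

Hypothesis HC : abelian C.

Lemma mono_factor X Y Q W (j : Mor X Y) (c : Mor Y Q) (w : Mor W Y) :
  mono j -> is_cokernel j c -> c ∘ w = 0 -> exists u, j ∘ u = w.
Proof.
move=> Hj [Hc Hcu] Hw.
case: HC => _ [_ _ _ Hmk _].
have [Z [g [Hg Hgu]]] := Hmk _ _ j Hj.
have [v [Hv _]] := Hcu _ g Hg.
have : g ∘ w = 0 by rewrite -Hv -compA Hw comp0r.
by case/Hgu=> u [Hu _]; exists u.
Qed.

Lemma epi_factor X Y K W (f : Mor X Y) (k : Mor K X) (w : Mor X W) :
  epi f -> is_kernel f k -> w ∘ k = 0 -> exists u, u ∘ f = w.
Proof.
move=> Hf Hk Hw.
case: HC => _ [_ _ _ _ Hec].
have [Z [g [Hg Hgu]]] := Hec _ _ f Hf.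
have [t Ht] := kernel_factor Hk Hg.
have : w ∘ g = 0 by rewrite -Ht compA Hw comp0l.
by case/Hgu=> u [Hu _]; exists u.
Qed.

Lemma mono_kernel_cokernel X Q K (p : Mor X Q) (m : Mor K X) :
  mono m -> is_cokernel m p -> is_kernel p m.
Proof.
move=> Hm Hp; split=> [|W g /(mono_factor Hm Hp) [u Hu]]; first exact: (proj1 Hp).
by exists u; split=> // v Hv; apply: Hm; rewrite Hu Hv.
Qed.

Lemma epi_cokernel_kernel X Y K (f : Mor X Y) (k : Mor K X) :
  epi f -> is_kernel f k -> is_cokernel k f.
Proof.
move=> Hf Hk; apply: cokernel_of_epi (proj1 Hk) _ => // W w.
exact: epi_factor.
Qed.

Lemma mono_epi_iso X Y (f : Mor X Y) : mono f -> epi f -> iso f.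
Proof.
move=> Hm He.
case: HC => _ [_ _ _ _ Hec].
have [Z [g [Hg Hgu]]] := Hec _ _ f He.
have : idm X ∘ g = 0 by rewrite (mono_eq0 Hm Hg) comp0r.
case/Hgu=> u [Hu _]; exists u; split=> //.
by apply: He; rewrite -compA Hu comp1l comp1r.
Qed.

(* The image is the kernel of the cokernel; [f] then factors through it
   by an epimorphism because the kernel of any map killing that factor
   already contains the image. *)
Lemma image_fact_exists X Y (f : Mor X Y) :
  exists I (e : Mor X I) (j : Mor I Y), image_fact f e j.
Proof.
case: HC => _ [_ Hker Hcok _ _].
have [Q [q Hq]] := Hcok _ _ f.
have [I [j Hj]] := Hker _ _ q.
have [e He] := kernel_factor Hj (proj1 Hq).
exists I, e, j; split; [exact: kernel_mono Hj | | by []].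
apply: epi_of_eq0 => W g Hg.
have [I' [k Hk]] := Hker _ _ g.
have [e' He'] := kernel_factor Hk Hg.
have Hjk : mono (j ∘ k).
  apply: mono_of_eq0 => V h; rewrite -compA => /(mono_eq0 (kernel_mono Hj)).
  exact: (mono_eq0 (kernel_mono Hk)).
have [Q2 [c Hc]] := Hcok _ _ (j ∘ k).
have Hcf : c ∘ f = 0 by rewrite -He -He' (compA j) (compA c) (proj1 Hc) comp0l.
have [t Ht] := cokernel_factor Hq Hcf.
have Hcj : c ∘ j = 0 by rewrite -Ht -compA (proj1 Hj) comp0r.
have [s Hs] := mono_factor Hjk Hc Hcj.
have ks : k ∘ s = idm I by apply: (kernel_mono Hj); rewrite compA Hs comp1r.
by rewrite -(comp1r g) -ks compA (proj1 Hk) comp0l.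
Qed.

Lemma pushout_of_mono K X T1 (k : Mor K X) (a : Mor K T1) : mono k ->
  exists X' (q : Mor X X') (mu : Mor T1 X'), [/\ mono mu, q ∘ k = mu ∘ a,
    forall W (x : Mor X W) (t : Mor T1 W), x ∘ k = t ∘ a ->
      exists w, w ∘ q = x /\ w ∘ mu = t
  & forall W (w1 w2 : Mor X' W), w1 ∘ q = w2 ∘ q -> w1 ∘ mu = w2 ∘ mu -> w1 = w2].
Proof.
move=> Hk; case: HC => _ [Hbp _ Hcok _ _].
have [P [i1 [i2 [p1 [p2 Hb]]]]] := Hbp X T1.
case: (Hb) => H11 H22 H12 H21 Hid.
set phi := i1 ∘ k - i2 ∘ a.
have [X' [c Hc]] := Hcok _ _ phi.
have p1phi : p1 ∘ phi = k by rewrite /phi compBr !compA H11 H12 comp1l comp0l subr0.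
have phi_mono : mono phi.
  apply: mono_of_eq0 => W g Hg; apply: (mono_eq0 Hk).
  by rewrite -p1phi -compA Hg comp0r.
exists X', (c ∘ i1), (c ∘ i2); split.
- apply: mono_of_eq0 => W g; rewrite -compA => /(mono_factor phi_mono Hc) [t Ht].
  have t0 : t = 0 by apply: (mono_eq0 Hk); rewrite -p1phi -compA Ht compA H12 comp0l.
  by rewrite -(comp1l g) -H22 -compA -Ht t0 !comp0r.
- by apply/eqP; rewrite -subr_eq0 -!compA -compBr (proj1 Hc).
- move=> W x t E.
  have : (x ∘ p1 + t ∘ p2) ∘ phi = 0.
    by rewrite /phi compBr !compA (copair_i1 Hb) (copair_i2 Hb) E subrr.
  case/(cokernel_factor Hc) => w Hw; exists w.
  by rewrite !compA Hw (copair_i1 Hb) (copair_i2 Hb).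
- move=> W w1 w2; rewrite !compA => E1 E2; apply: (cokernel_epi Hc).
  by rewrite -[_ ∘ c]comp1r -[w2 ∘ c]comp1r -Hid !compDr !compA E1 E2.
Qed.

End Preadditive.

Section Stable.
Variable C : PreAdd.
Hypothesis HC : abelian C.
Variable T : C -> Prop.
Hypothesis HTproj : forall X : C, T X -> projective X.
Hypothesis HT0 : forall Z : C, is_zero_obj Z -> T Z.
Hypothesis HTsum : forall (X Y P : C) (i1 : Mor X P) (i2 : Mor Y P)
    (p1 : Mor P X) (p2 : Mor P Y), T X -> T Y -> is_biprod i1 i2 p1 p2 -> T P.
Local Notation compA := (@Defs.compA C).
Local Notation ft := (factors_through_T T).
Implicit Types X Y Z W : C.

Lemma lift_from_T T1 X Y (e : Mor X Y) (g : Mor T1 Y) :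
  T T1 -> epi e -> exists u, e ∘ u = g.
Proof. by move=> HT He; exact: (HTproj HT He g). Qed.

Lemma ft_via T1 X Y (a : Mor X T1) (b : Mor T1 Y) : T T1 -> ft (b ∘ a).
Proof. by move=> H; exists T1, a, b. Qed.

Lemma ft_compl X Y Z (g : Mor Y Z) (f : Mor X Y) : ft f -> ft (g ∘ f).
Proof. by move=> [T1 [a [b [H ->]]]]; rewrite compA; exact: ft_via. Qed.

Lemma ft_compr X Y Z (g : Mor Y Z) (f : Mor X Y) : ft g -> ft (g ∘ f).
Proof. by move=> [T1 [a [b [H ->]]]]; rewrite -compA; exact: ft_via. Qed.

Lemma ft_opp X Y (f : Mor X Y) : ft f -> ft (- f).
Proof. by move=> [T1 [a [b [H ->]]]]; rewrite -compNl; exact: ft_via. Qed.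

Lemma ft_add X Y (f g : Mor X Y) : ft f -> ft g -> ft (f + g).
Proof.
move=> [T1 [a1 [b1 [H1 ->]]]] [T2 [a2 [b2 [H2 ->]]]].
case: HC => _ [Hbp _ _ _ _]; have [P [i1 [i2 [p1 [p2 Hb]]]]] := Hbp T1 T2.
have -> : b1 ∘ a1 + b2 ∘ a2 = (b1 ∘ p1 + b2 ∘ p2) ∘ (i1 ∘ a1 + i2 ∘ a2).
  by rewrite compDr !compA (copair_i1 Hb) (copair_i2 Hb).
exact: ft_via (HTsum H1 H2 Hb).
Qed.

Lemma ft0 X Y : ft (0 : Mor X Y).
Proof. by case: HC => [[Z HZ] _]; rewrite -(comp0l Y (0 : Mor X Z)); exact: ft_via (HT0 HZ). Qed.

Lemma st_monoP X Y (f : Mor X Y) :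
  st_mono T f <-> forall W (d : Mor W X), ft (f ∘ d) -> ft d.
Proof.
rewrite /st_mono /st_eq; split=> [H W d | H W g1 g2]; last by rewrite -compBr; exact: H.
by move: (H W d 0); rewrite comp0r !subr0.
Qed.

Lemma st_epiP X Y (f : Mor X Y) :
  st_epi T f <-> forall W (d : Mor Y W), ft (d ∘ f) -> ft d.
Proof.
rewrite /st_epi /st_eq; split=> [H W d | H W g1 g2]; last by rewrite -compBl; exact: H.
by move: (H W d 0); rewrite comp0l !subr0.
Qed.

Lemma st_epi_of_comp X Y Z (g : Mor Y Z) (s : Mor X Y) :
  st_epi T (g ∘ s) -> st_epi T g.
Proof.
move/st_epiP=> H; apply/st_epiP => W d Hd.
by apply: H; rewrite compA; exact: ft_compr.
Qed.

Lemma st_mono_of_epi X Y (f : Mor X Y) : epi f ->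
  (forall W (w : Mor W X), f ∘ w = 0 -> ft w) -> st_mono T f.
Proof.
move=> Hf H; apply/st_monoP => W d [T1 [a [b [HT1 E]]]].
have [b' Hb'] := lift_from_T b HT1 Hf.
have : f ∘ (d - b' ∘ a) = 0 by rewrite compBr E compA Hb' subrr.
by move/H=> Hd; rewrite -(subrK (b' ∘ a) d); apply: ft_add Hd (ft_via _ _ HT1).
Qed.

Lemma retraction_of_st_section X Y (f : Mor X Y) (v : Mor Y X) :
  epi f -> st_eq T (f ∘ v) (idm Y) -> retraction f.
Proof.
move=> Hf [T1 [a [b [HT1 E]]]].
have [b' Hb'] := lift_from_T b HT1 Hf.
by exists (v - b' ∘ a); rewrite compBr compA Hb' -E opprB addrC subrK.
Qed.

Definition image_extension K X T' (m : Mor K X) (h : Mor X T') : Prop :=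
  exists I (e : Mor K I) (j : Mor I T'), image_fact (h ∘ m) e j /\
    exists ht : Mor X I, j ∘ ht ∘ m = h ∘ m.

Lemma st_epi_of_image_extension K X Y (m : Mor K X) (p : Mor X Y) :
  is_cokernel m p -> (forall T1 (a : Mor X T1), T T1 -> image_extension m a) ->
  st_epi T p.
Proof.
move=> Hp Hext; apply/st_epiP => W g [T1 [a [b [HT1 E]]]].
have [I [e [j [[Hj He Hae] [ht Hht]]]]] := Hext _ a HT1.
have : (a - j ∘ ht) ∘ m = 0 by rewrite compBl Hht subrr.
case/(cokernel_factor Hp) => h' Hh'.
have bj : b ∘ j = 0.
  by apply: (epi_eq0 He); rewrite -compA -Hae compA -E -compA (proj1 Hp) comp0r.
exists T1, h', b; split=> //.
by apply: (cokernel_epi Hp); rewrite E -compA Hh' compBr compA bj comp0l subr0.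
Qed.

Lemma image_extension_of_st_epi K X Y (m : Mor K X) (p : Mor X Y) :
  epi p -> is_kernel p m -> st_epi T p ->
  forall T' (h : Mor X T'), T T' ->
  forall I (e : Mor K I) (j : Mor I T'), image_fact (h ∘ m) e j ->
    exists u : Mor X I, u ∘ m = e.
Proof.
move=> Hp Hm /st_epiP Hse T' h HT' I e j [Hj He Hhe].
case: HC => _ [_ _ Hcokex _ _]; have [Q [c Hc]] := Hcokex _ _ j.
have : (c ∘ h) ∘ m = 0 by rewrite -compA Hhe compA (proj1 Hc) comp0l.
case/(epi_factor HC Hp Hm) => g Hg.
have : ft (g ∘ p) by rewrite Hg; exact: ft_via.
case/Hse => T3 [a [b [HT3 Eg]]].
have [b' Hb'] := lift_from_T b HT3 (cokernel_epi Hc).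
have : c ∘ (h - b' ∘ a ∘ p) = 0 by rewrite compBr !compA Hb' -Eg Hg subrr.
case/(mono_factor HC Hj Hc) => u Hu; exists u.
by apply: Hj; rewrite compA Hu compBl -!compA (proj1 Hm) !comp0r subr0 Hhe.
Qed.


Definition cond2 :=
  forall (K X : C) (mu : Mor K X), mono mu -> ~ split_mono mu -> ft mu ->
    exists (T' : C) (h : Mor X T'), T T' /\
      forall (I : C) (e : Mor K I) (j : Mor I T'), image_fact (h ∘ mu) e j ->
        forall ht : Mor X I, j ∘ ht ∘ mu <> h ∘ mu.

Definition cond3 :=
  forall (T0 X : C) (mu : Mor T0 X), T T0 -> mono mu -> ~ split_mono mu ->
    exists (T' : C) (h : Mor X T'), T T' /\
      forall (I : C) (e : Mor T0 I) (j : Mor I T'), image_fact (h ∘ mu) e j ->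
        forall ht : Mor X I, j ∘ ht ∘ mu <> h ∘ mu.

Definition cond4 :=
  forall (X Y K : C) (f : Mor X Y) (k : Mor K X), epi f -> is_kernel f k -> ft k ->
    (forall (T0 : C) (h : Mor X T0), T T0 ->
       forall (I : C) (e : Mor K I) (j : Mor I T0), image_fact (h ∘ k) e j ->
         exists u : Mor X I, u ∘ k = e) ->
    retraction f.

Definition cond5 :=
  forall (X Y K : C) (f : Mor X Y) (k : Mor K X), epi f -> ~ retraction f ->
    is_kernel f k -> T K ->
    exists (T' : C) (h : Mor X T'), T T' /\
      forall (g : Mor Y T') (K2 : C) (k2 : Mor K2 X), is_kernel (h - g ∘ f) k2 ->
        forall (P : C) (i1 : Mor K P) (i2 : Mor K2 P) (p1 : Mor P K)
               (p2 : Mor P K2), is_biprod i1 i2 p1 p2 ->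
        forall (I : C) (e : Mor P I) (j : Mor I X),
          image_fact (k ∘ p1 + k2 ∘ p2) e j -> ~ iso j.

Lemma cond2_of_balanced : stable_balanced T -> cond2.
Proof.
move=> Hbal K X mu Hmu Hns [T2 [al [be [HT2 Emu]]]]; apply: NNPP => Hno.
have Hext : forall T1 (a : Mor X T1), T T1 -> image_extension mu a.
  move=> T1 a HT1; apply: NNPP => Hn; apply: Hno; exists T1, a; split=> // I e j Hi ht Ht.
  by apply: Hn; exists I, e, j; split=> //; exists ht.
case: HC => _ [_ _ Hcok _ _]; have [Q [pi Hpi]] := Hcok _ _ mu.
have Hsm : st_mono T pi.
  apply: st_mono_of_epi (cokernel_epi Hpi) _ => W w Hw.
  have [c <-] := mono_factor HC Hmu Hpi Hw.
  by rewrite Emu -compA; exact: ft_via.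
have Hse := st_epi_of_image_extension Hpi Hext.
have [s [[T1 [a [b [HT1 E]]]] _]] := Hbal _ _ _ Hsm Hse.
(* [s ∘ pi ≡ 1] makes [mu] factor through [a ∘ mu] *)
have Emu2 : mu = (- b) ∘ (a ∘ mu).
  by rewrite compNl compA -E compBl -compA (proj1 Hpi) comp0r comp1l sub0r opprK.
have [I [e [j [[Hj He Hae] [ht Hht]]]]] := Hext _ a HT1.
have htmu : ht ∘ mu = e by apply: Hj; rewrite compA Hht Hae.
have emono : mono e.
  apply: mono_of_eq0 => V g Hg; apply: (mono_eq0 Hmu).
  by rewrite Emu2 Hae -!compA Hg !comp0r.
have [ei [Hei _]] := mono_epi_iso HC emono He.
by apply: Hns; exists (ei ∘ ht); rewrite -compA htmu.
Qed.

Lemma cond3_of_cond2 : cond2 -> cond3.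
Proof.
move=> H2 T0 X mu HT Hm Hns; apply: H2 => //.
by rewrite -(comp1r mu); exact: ft_via.
Qed.

Lemma split_mono_of_cond3 T1 X Y (mu : Mor T1 X) (p : Mor X Y) :
  cond3 -> T T1 -> mono mu -> epi p -> is_kernel p mu -> st_epi T p ->
  split_mono mu.
Proof.
move=> H3 HT1 Hmu Hp Hk Hse; apply: NNPP => Hns.
have [T' [h [HT' Hno]]] := H3 _ _ mu HT1 Hmu Hns.
have [I [e [j Hi]]] := image_fact_exists HC (h ∘ mu).
have [u Hu] := image_extension_of_st_epi Hp Hk Hse HT' Hi.
by apply: (Hno I e j Hi u); case: Hi => _ _ ->; rewrite -compA Hu.
Qed.

Lemma cond4_of_cond3 : cond3 -> cond4.
Proof.
move=> H3 X Y K f k Hf Hk [T1 [al [be [HT1 Ek]]]] Hii.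
have Hfk := epi_cokernel_kernel HC Hf Hk.
have Hse : st_epi T f.
  apply: st_epi_of_image_extension Hfk _ => T2 a HT2.
  have [I [e [j Hi]]] := image_fact_exists HC (a ∘ k).
  have [u Hu] := Hii _ a HT2 _ _ _ Hi.
  by exists I, e, j; split=> //; exists u; case: Hi => _ _ ->; rewrite -compA Hu.
have [X' [q [mu [Hmu Hqk Hpush Hjoint]]]] := pushout_of_mono HC al (kernel_mono Hk).
have [f2 [Hf2q Hf2mu]] : exists f2, f2 ∘ q = f /\ f2 ∘ mu = 0.
  by apply: Hpush; rewrite (proj1 Hk) comp0l.
have Hf2 : epi f2 by apply: (epi_of_comp (f := q)); rewrite Hf2q.
have Hf2mu_coker : is_cokernel mu f2.
  apply: (cokernel_of_epi Hf2 Hf2mu) => W w Hw.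
  have : (w ∘ q) ∘ k = 0 by rewrite -compA Hqk compA Hw comp0l.
  case/(cokernel_factor Hfk) => g Hg; exists g.
  by apply: Hjoint; rewrite -compA; [rewrite Hf2q | rewrite Hf2mu comp0r Hw].
have [r Hr] : split_mono mu.
  apply: (split_mono_of_cond3 H3 HT1 Hmu Hf2 (mono_kernel_cokernel HC Hmu Hf2mu_coker)).
  by apply: (st_epi_of_comp (s := q)); rewrite Hf2q.
have rqk : (r ∘ q) ∘ k = al by rewrite -compA Hqk compA Hr comp1l.
have : (idm X - be ∘ (r ∘ q)) ∘ k = 0 by rewrite compBl comp1l -compA rqk -Ek subrr.
case/(cokernel_factor Hfk) => v Hv.
apply: (@retraction_of_st_section _ _ _ v Hf); apply: Hse; rewrite /st_eq.
rewrite -compA Hv compBr comp1r comp1l addrAC subrr add0r.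
by apply: ft_opp; rewrite compA; exact: ft_via.
Qed.

Lemma st_iso_of_copair_section X Y T1 P K (f : Mor X Y) (c : Mor T1 Y)
    (i1 : Mor X P) (i2 : Mor T1 P) (p1 : Mor P X) (p2 : Mor P T1)
    (k : Mor K P) (s : Mor Y P) :
  T T1 -> is_biprod i1 i2 p1 p2 -> is_kernel (f ∘ p1 + c ∘ p2) k -> ft k ->
  (f ∘ p1 + c ∘ p2) ∘ s = idm Y -> st_iso T f.
Proof.
move=> HT1 Hb Hk Hkft Hs; exists (p1 ∘ s); split; rewrite /st_eq.
- have : (f ∘ p1 + c ∘ p2) ∘ (s ∘ (f ∘ p1 + c ∘ p2) - idm P) = 0.
    by rewrite compBr compA Hs comp1l comp1r subrr.
  case/(kernel_factor Hk) => t Ht.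
  have -> : (p1 ∘ s) ∘ f - idm X = (p1 ∘ (s ∘ (f ∘ p1 + c ∘ p2) - idm P)) ∘ i1.
    by case: (Hb) => H11 _ _ _ _; rewrite compBr compBl comp1r H11 -!compA (copair_i1 Hb).
  by rewrite -Ht; apply/ft_compr/ft_compl/ft_compr.
- have E : f ∘ p1 = (f ∘ p1 + c ∘ p2) - c ∘ p2 by rewrite addrK.
  rewrite compA E compBl Hs addrAC subrr add0r.
  by apply: ft_opp; rewrite -compA; exact: ft_via.
Qed.

Lemma balanced_of_cond4 : cond4 -> stable_balanced T.
Proof.
move=> H4 X Y f /st_monoP Hsm Hse.
case: HC => _ [Hbp Hkerex Hcokex _ _].
have [Q [q Hq]] := Hcokex _ _ f.
have : ft (q ∘ f) by rewrite (proj1 Hq); exact: ft0.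
case/((st_epiP f).1 Hse) => T1 [a [b [HT1 Eq]]].
have [c Hc] := lift_from_T b HT1 (cokernel_epi Hq).
have [P [i1 [i2 [p1 [p2 Hb]]]]] := Hbp X T1.
have Hf' : epi (f ∘ p1 + c ∘ p2).
  apply: (copair_epi Hb) => W g Hgf Hgc.
  have [u Hu] := cokernel_factor Hq Hgf.
  by rewrite -Hu Eq compA -Hc compA Hu Hgc !comp0l.
have [K [k Hk]] := Hkerex _ _ (f ∘ p1 + c ∘ p2).
have Hkft : ft k.
  have E : f ∘ (p1 ∘ k) = - (c ∘ (p2 ∘ k)).
    by apply/eqP; rewrite -addr_eq0 !compA -compDl (proj1 Hk).
  have H1 : ft (p1 ∘ k).
    by apply: Hsm; rewrite E; apply: ft_opp; exact: ft_via.
  by rewrite (biprod_decomp Hb k); apply: ft_add; [exact: ft_compl | exact: ft_via].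
have Hse' : st_epi T (f ∘ p1 + c ∘ p2).
  by apply: (st_epi_of_comp (s := i1)); rewrite (copair_i1 Hb).
have [s Hs] := H4 _ _ _ _ _ Hf' Hk Hkft (image_extension_of_st_epi Hf' Hk Hse').
exact: st_iso_of_copair_section HT1 Hb Hk Hkft Hs.
Qed.

Lemma cond5_of_balanced : stable_balanced T -> cond5.
Proof.
move=> Hbal X Y K f k Hf Hnr Hk HTK; apply: NNPP => Hno.
have Hext : forall T' (h : Mor X T'), T T' -> exists (g : Mor Y T') K2 (k2 : Mor K2 X),
    is_kernel (h - g ∘ f) k2 /\ exists P (i1 : Mor K P) (i2 : Mor K2 P) p1 p2,
    is_biprod i1 i2 p1 p2 /\ exists I (e : Mor P I) (j : Mor I X),
    image_fact (k ∘ p1 + k2 ∘ p2) e j /\ iso j.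
  move=> T' h HT'; apply: NNPP => Hn; apply: Hno; exists T', h; split=> //.
  move=> g K2 k2 Hk2 P i1 i2 p1 p2 Hb I e j Hi Hiso; apply: Hn.
  exists g, K2, k2; split=> //; exists P, i1, i2, p1, p2; split=> //.
  by exists I, e, j.
have Hsm : st_mono T f.
  apply: st_mono_of_epi Hf _ => W w Hw.
  by have [u <-] := kernel_factor Hk Hw; exact: ft_via.
have Hse : st_epi T f.
  apply/st_epiP => W g0 [T1 [a [b [HT1 E]]]].
  have [g [K2 [k2 [Hk2 [P [i1 [i2 [p1 [p2 [Hb [I [e [j [[_ He Hie] Hiso]]]]]]]]]]]]]] :=
    Hext _ a HT1.
  have Hsum : epi (k ∘ p1 + k2 ∘ p2) by rewrite Hie; exact: epi_comp (iso_epi Hiso) He.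
  have b0 : b ∘ (a - g ∘ f) = 0.
    apply: (copair_epi_eq0 Hb Hsum).
    - by rewrite compBr compBl -E -!compA (proj1 Hk) !comp0r subrr.
    - by rewrite -compA (proj1 Hk2) comp0r.
  exists T1, g, b; split=> //.
  by apply: Hf; rewrite E -compA; move: b0; rewrite compBr => /subr0_eq.
have [s [_ Hs]] := Hbal _ _ _ Hsm Hse.
by apply: Hnr; exact: retraction_of_st_section Hf Hs.
Qed.

Lemma cond3_of_cond5 : cond5 -> cond3.
Proof.
move=> H5 T0 X mu HT Hm Hns.
case: HC => _ [Hbp Hkerex Hcokex _ _].
have [Q [pi Hpi]] := Hcokex _ _ mu.
have Hpi_epi := cokernel_epi Hpi.
have Hnr : ~ retraction pi.
  move=> [s Hs]; apply: Hns.
  have : pi ∘ (idm X - s ∘ pi) = 0 by rewrite compBr compA Hs comp1l comp1r subrr.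
  case/(mono_factor HC Hm Hpi) => r Hr; exists r.
  by apply: Hm; rewrite compA Hr compBl comp1l -compA (proj1 Hpi) comp0r subr0 comp1r.
have [T' [h [HT' H5']]] := H5 X Q T0 pi mu Hpi_epi Hnr (mono_kernel_cokernel HC Hm Hpi) HT.
exists T', h; split=> // I e j [Hj He Hhe] ht Hht.
have : (h - j ∘ ht) ∘ mu = 0 by rewrite compBl Hht subrr.
case/(cokernel_factor Hpi) => g Hg.
have Hphi : h - g ∘ pi = j ∘ ht by rewrite Hg subKr.
have [K2 [k2 Hk2]] := Hkerex _ _ (h - g ∘ pi).
have [P [i1 [i2 [p1 [p2 Hb]]]]] := Hbp T0 K2.
have [I' [e' [j' Hi']]] := image_fact_exists HC (mu ∘ p1 + k2 ∘ p2).
apply: (H5' g K2 k2 Hk2 P i1 i2 p1 p2 Hb I' e' j' Hi').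
case: (Hi') => Hj' _ Hie'.
apply: mono_epi_iso => //; apply: (epi_of_comp (f := e')); rewrite -Hie'.
(* [ht] is epi with kernel [k2]; so maps killing [mu] and [k2] vanish *)
have htmu : ht ∘ mu = e by apply: Hj; rewrite compA Hht Hhe.
have Hht_epi : epi ht.
  by apply: epi_of_eq0 => W v Hv; apply: (epi_eq0 He); rewrite -htmu compA Hv comp0l.
have Hk2ht : is_kernel ht k2 by apply: (kernel_comp_mono Hj); rewrite -Hphi.
apply: (copair_epi Hb) => W w Hwmu Hwk2.
have [v Hv] := epi_factor HC Hht_epi Hk2ht Hwk2.
have : v ∘ e = 0 by rewrite -htmu compA Hv Hwmu.
by move/(epi_eq0 He) => v0; rewrite -Hv v0 comp0l.
Qed.

End Stable.

Theorem theorem4p6 (C : PreAdd) (HC : abelian C) (T : C -> Prop)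
  (HTproj : forall X : C, T X -> projective X)
  (HT0 : forall Z : C, is_zero_obj Z -> T Z)
  (HTsum : forall (X Y P : C) (i1 : Mor X P) (i2 : Mor Y P)
              (p1 : Mor P X) (p2 : Mor P Y),
      T X -> T Y -> is_biprod i1 i2 p1 p2 -> T P)
  (HTsummand : forall (X Y : C) (s : Mor X Y) (r : Mor Y X),
      T Y -> r ∘ s = idm X -> T X) :
  let cond1 := stable_balanced T in
  let cond2 :=
    forall (K X : C) (mu : Mor K X), mono mu -> ~ split_mono mu ->
      factors_through_T T mu ->
      exists (T' : C) (h : Mor X T'), T T' /\
        forall (I : C) (e : Mor K I) (j : Mor I T'), image_fact (h ∘ mu) e j ->
          forall ht : Mor X I, j ∘ ht ∘ mu <> h ∘ mu in
  let cond3 :=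
    forall (T0 X : C) (mu : Mor T0 X), T T0 -> mono mu -> ~ split_mono mu ->
      exists (T' : C) (h : Mor X T'), T T' /\
        forall (I : C) (e : Mor T0 I) (j : Mor I T'), image_fact (h ∘ mu) e j ->
          forall ht : Mor X I, j ∘ ht ∘ mu <> h ∘ mu in
  let cond4 :=
    forall (X Y K : C) (f : Mor X Y) (k : Mor K X), epi f -> is_kernel f k ->
      factors_through_T T k ->
      (forall (T0 : C) (h : Mor X T0), T T0 ->
         forall (I : C) (e : Mor K I) (j : Mor I T0), image_fact (h ∘ k) e j ->
           exists u : Mor X I, u ∘ k = e) ->
      retraction f in
  let cond5 :=
    forall (X Y K : C) (f : Mor X Y) (k : Mor K X), epi f -> ~ retraction f ->
      is_kernel f k -> T K ->
      exists (T' : C) (h : Mor X T'), T T' /\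
        forall (g : Mor Y T') (K2 : C) (k2 : Mor K2 X), is_kernel (h - g ∘ f) k2 ->
          forall (P : C) (i1 : Mor K P) (i2 : Mor K2 P) (p1 : Mor P K)
                 (p2 : Mor P K2), is_biprod i1 i2 p1 p2 ->
          forall (I : C) (e : Mor P I) (j : Mor I X),
            image_fact (k ∘ p1 + k2 ∘ p2) e j -> ~ iso j in
  [/\ cond1 <-> cond2, cond1 <-> cond3, cond1 <-> cond4 & cond1 <-> cond5].
Proof.
move=> c1 c2 c3 c4 c5.
have i12 : c1 -> c2 by apply: cond2_of_balanced.
have i23 : c2 -> c3 by apply: cond3_of_cond2.
have i34 : c3 -> c4 by apply: cond4_of_cond3.
have i41 : c4 -> c1 by apply: balanced_of_cond4.
have i15 : c1 -> c5 by apply: cond5_of_balanced.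
have i53 : c5 -> c3 by apply: cond3_of_cond5.
by split; split; tauto.
Qed.
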